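(* There exist real numbers $\delta,\varepsilon$ with $0<\delta<\varepsilon<1/2$ and an integer $n>1$ such that $P_{\varepsilon,\delta}$ is a quantum system and $\mathrm{NDP}_n(P_{\varepsilon,\delta})$ is a non-locality-distillation protocol, i.e. $NL[P_{\varepsilon,\delta}^n]>NL[P_{\varepsilon,\delta}]>2$.
   Context: A binary-input/binary-output bipartite system is a conditional probability distribution $P(ab|xy)$ with $a,b,x,y\in\{0,1\}$ ($x,a$ Alice's input/output, $y,b$ Bob's). Correlation functions: $X_{xy}(P)=P(00|xy)+P(11|xy)-P(01|xy)-P(10|xy)$. CHSH non-locality: $NL[P]=\max_{x,y\in\{0,1\}}|X_{xy}(P)+X_{x\bar y}(P)+X_{\bar x y}(P)-X_{\bar x\bar y}(P)|$, with $\bar0=1,\bar1=0$. A system $P$ is a quantum system if there exist Hilbert spaces $H_A,H_B$, a density operator $\rho$ on $H_A\otimes H_B$, and for each $x\in\{0,1\}$ a two-outcome POVM $\{E^x_a\}_{a\in\{0,1\}}$ on $H_A$ and for each $y$ a two-outcome POVM $\{F^y_b\}_{b\in\{0,1\}}$ on $H_B$ with $P(ab|xy)=\mathrm{tr}(\rho\,(E^x_a\otimes F^y_b))$ for all $a,b,x,y$. Protocol $\mathrm{NDP}_n(P)$: on inputs $x,y$ the parties feed $x$ and $y$ into each of $n$ independent copies of $P$, obtaining $(a_i,b_i)\sim P(a_ib_i|xy)$ independently for $i=1,\dots,n$, and output $a=a_1\oplus\cdots\oplus a_n$, $b=b_1\oplus\cdots\oplus b_n$; the induced distribution of $(a,b)$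 given $(x,y)$ is $P^n$. A non-locality-distillation protocol is one for which $NL[P^n]>NL[P]>2$. For $0\le\varepsilon,\delta\le 1$, $P_{\varepsilon,\delta}$ is the system with $P_{\varepsilon,\delta}(00|xy)=P_{\varepsilon,\delta}(11|xy)=(1-\delta)/2$, $P_{\varepsilon,\delta}(01|xy)=P_{\varepsilon,\delta}(10|xy)=\delta/2$ for $xy\in\{00,01,10\}$, and $P_{\varepsilon,\delta}(00|11)=P_{\varepsilon,\delta}(11|11)=(1-\varepsilon)/2$, $P_{\varepsilon,\delta}(01|11)=P_{\varepsilon,\delta}(10|11)=\varepsilon/2$. *)

From HB Require Import structures.
From mathcomp Require Import all_boot all_order all_algebra all_field.
Set Implicit Arguments. Unset Strict Implicit. Unset Printing Implicit Defensive.
Import Order.TTheory GRing.Theory Num.Theory.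
Local Open Scope ring_scope.

(* A binary-input/binary-output bipartite system: P a b x y = P(ab|xy).
   The alphabet {0,1} is represented by bool (false = 0, true = 1). *)
Definition bsystem := bool -> bool -> bool -> bool -> algC.

Definition corr (P : bsystem) (x y : bool) : algC :=
  P false false x y + P true true x y - P false true x y - P true false x y.

Definition chsh (P : bsystem) (x y : bool) : algC :=
  `| corr P x y + corr P x (~~ y) + corr P (~~ x) y - corr P (~~ x) (~~ y) |.

Definition NL (P : bsystem) : algC :=
  Num.max (Num.max (chsh P false false) (chsh P false true))
          (Num.max (chsh P true false) (chsh P true true)).

(* Distribution of (a1 xor a2, b1 xor b2) for independent copies P, Q
   fed with the same inputs. *)
Definition xor_comb (P Q : bsystem) : bsystem := fun a b x y =>
  \sum_(a1 : bool) \sum_(b1 : bool) P a1 b1 x y * Q (addb a a1) (addb b b1) x y.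

(* P^n : XOR of the outputs of n independent copies (empty XOR = 0). *)
Fixpoint ndp (n : nat) (P : bsystem) : bsystem :=
  match n with
  | 0 => fun a b _ _ => if (~~ a) && (~~ b) then 1 else 0
  | n'.+1 => xor_comb P (ndp n' P)
  end.

Definition Ped (eps delta : algC) : bsystem := fun a b x y =>
  let e := if x && y then eps else delta in
  if a == b then (1 - e) / 2 else e / 2.

Definition adjmx m n (M : 'M[algC]_(m, n)) : 'M[algC]_(n, m) := (map_mx Num.conj M)^T.

Definition psdmx n (M : 'M[algC]_n) : Prop :=
  forall v : 'cV[algC]_n, 0 <= (adjmx v *m M *m v) 0 0.

Definition density n (rho : 'M[algC]_n) : Prop := psdmx rho /\ \tr rho = 1.

Definition povm2 n (E : bool -> 'M[algC]_n) : Prop :=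
  psdmx (E false) /\ psdmx (E true) /\ E false + E true = 1%:M.

(* index k of C^m (x) C^n = C^(m*n) as a pair (i, j) *)
Definition tens_index m n (k : 'I_(m * n)) : 'I_m * 'I_n :=
  enum_val (cast_ord (esym (mxvec_cast m n)) k).

Definition tensmx m n (A : 'M[algC]_m) (B : 'M[algC]_n) : 'M[algC]_(m * n) :=
  \matrix_(k, l) (A (tens_index k).1 (tens_index l).1 *
                  B (tens_index k).2 (tens_index l).2).

Definition quantum_system (P : bsystem) : Prop :=
  exists (dA dB : nat) (rho : 'M[algC]_(dA * dB))
         (E : bool -> bool -> 'M[algC]_dA) (F : bool -> bool -> 'M[algC]_dB),
    density rho /\ (forall x, povm2 (E x)) /\ (forall y, povm2 (F y)) /\
    forall a b x y, P a b x y = \tr (rho *m tensmx (E x a) (F y b)).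

From HB Require Import structures.
From mathcomp Require Import all_boot all_order all_algebra all_field.
From mathcomp Require Import ring lra.
Set Implicit Arguments. Unset Strict Implicit. Unset Printing Implicit Defensive.
Import Order.TTheory GRing.Theory Num.Theory.
Local Open Scope ring_scope.

(* Non-locality distillation for P_{eps,delta}, with delta = 1/26 and
   eps = 1369/4394 = 37^2 / (2 * 13^3), by two copies of the XOR protocol.

   X_xy is multiplicative under XOR of independent copies,
     so X_xy(P^n) = X_xy(P)^n.  For P_{eps,delta} it equals c = 1 - 2 delta
     except at (x,y) = (1,1), where it is d = 1 - 2 eps; when 0 <= d <= c the
     CHSH maximum is 3c - d, hence NL[P^n] = 3 c^n - d^n.  With c = 12/13 and
     d = 828/2197 the inequalities NL[P] > 2 and NL[P^2] > NL[P] are then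
     rational arithmetic, transported to algC along ratr.
   - Quantum realisation.  Positive semidefiniteness of Gram matrices, tensor
     products of rank-one operators and the maximally entangled state are
     developed in arbitrary dimension; measuring along vectors u, v on that
     state gives P(ab|xy) = (u . v)^2 / (n |u|^2 |v|^2).  Alice measures
     along {(13,0),(0,13)} or {(12,5),(5,-12)}, Bob along {(5,1),(1,-5)} or
     {(5,-1),(1,5)}; the resulting 16 probabilities are those of P_{eps,delta}. *)

Lemma corr_xor_comb (P Q : bsystem) x y :
  corr (xor_comb P Q) x y = corr P x y * corr Q x y.
Proof. by rewrite /corr /xor_comb !big_bool /=; ring. Qed.

Lemma corr_ndp n (P : bsystem) x y : corr (ndp n P) x y = corr P x y ^+ n.
Proof.
elim: n => [|n IHn]; first by rewrite /corr /= !subr0 addr0.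
by rewrite /= corr_xor_comb IHn exprS.
Qed.

Lemma corr_Ped e d x y : corr (Ped e d) x y = 1 - 2 * (if x && y then e else d).
Proof. by rewrite /corr /Ped /=; field. Qed.

Lemma NL_of_corr (P : bsystem) (c d : algC) :
  (forall x y, corr P x y = if x && y then d else c) -> 0 <= d -> d <= c ->
  NL P = c *+ 3 - d.
Proof.
move=> hcorr d_ge0 d_le_c; rewrite /NL /chsh !hcorr /=.
have c_ge0 : 0 <= c := le_trans d_ge0 d_le_c.
have -> : c + c + d - c = c + d by ring.
have -> : c + d + c - c = c + d by ring.
have -> : d + c + c - c = c + d by ring.
have -> : c + c + c - d = c *+ 3 - d by ring.
have le_cd : c + d <= c *+ 3 - d.
  by rewrite -subr_ge0 (_ : _ - _ = (c - d) *+ 2); [rewrite mulrn_wge0 // subr_ge0 | ring].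
have cd_ge0 : 0 <= c + d := addr_ge0 c_ge0 d_ge0.
rewrite maxxx (ger0_norm (le_trans cd_ge0 le_cd)) (ger0_norm cd_ge0).
by rewrite !(max_l le_cd).
Qed.

Lemma NL_ndp n (P : bsystem) (c d : algC) :
  (forall x y, corr P x y = if x && y then d else c) -> 0 <= d -> d <= c ->
  NL (ndp n P) = c ^+ n *+ 3 - d ^+ n.
Proof.
move=> hcorr d_ge0 d_le_c; apply: NL_of_corr; last 2 first.
- exact: exprn_ge0.
- by rewrite lerXn2r // nnegrE (le_trans d_ge0 d_le_c).
by move=> x y; rewrite corr_ndp hcorr; case: (x && y).
Qed.

Lemma adjmxM m n p (A : 'M[algC]_(m, n)) (B : 'M[algC]_(n, p)) :
  adjmx (A *m B) = adjmx B *m adjmx A.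
Proof. by rewrite /adjmx map_mxM trmx_mul. Qed.

Lemma adjmxK m n (A : 'M[algC]_(m, n)) : adjmx (adjmx A) = A.
Proof. by apply/matrixP => i j; rewrite !mxE conjCK. Qed.

(* Gram matrices w w^H are positive semidefinite: <v, w w^H v> = |w^H v|^2. *)
Lemma psd_gram n m (w : 'M[algC]_(n, m)) : psdmx (w *m adjmx w).
Proof.
move=> v; rewrite mulmxA -mulmxA -{1}[w]adjmxK -adjmxM mxE.
by apply: sumr_ge0 => i _; rewrite !mxE mulrC mul_conjC_ge0.
Qed.

Lemma psd_scale n (c : algC) (M : 'M[algC]_n) : 0 <= c -> psdmx M -> psdmx (c *: M).
Proof. by move=> c_ge0 psdM v; rewrite -scalemxAr -scalemxAl mxE mulr_ge0. Qed.

Lemma tens_index_mx m n (i : 'I_m) (j : 'I_n) : tens_index (mxvec_index i j) = (i, j).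
Proof. by rewrite /tens_index /mxvec_index cast_ordK enum_rankK. Qed.

(* tens_index is a bijection 'I_(m * n) -> 'I_m * 'I_n. *)
Lemma sum_tens (R : nmodType) m n (G : 'I_m * 'I_n -> R) :
  \sum_(k : 'I_(m * n)) G (tens_index k) = \sum_(p : 'I_m * 'I_n) G p.
Proof.
rewrite (reindex (fun p : 'I_m * 'I_n => mxvec_index p.1 p.2)) /=.
  by apply: eq_bigr => -[i j] _; rewrite tens_index_mx.
exists (@tens_index m n) => [[i j] _|k _]; first by rewrite tens_index_mx.
by case: (mxvec_indexP k) => i j; rewrite tens_index_mx.
Qed.

Lemma sum_tens_diag (R : pzSemiRingType) n (F : 'I_n -> 'I_n -> R) :
  \sum_(k : 'I_(n * n)) ((tens_index k).1 == (tens_index k).2)%:R *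
                         F (tens_index k).1 (tens_index k).2 = \sum_i F i i.
Proof.
rewrite (sum_tens (fun p => (p.1 == p.2)%:R * F p.1 p.2)).
rewrite -(pair_big xpredT xpredT (fun i j => (i == j)%:R * F i j)) /=.
apply: eq_bigr => i _; rewrite (bigD1 i) //= eqxx mul1r big1 ?addr0 //.
by move=> j; rewrite eq_sym => /negbTE ->; rewrite mul0r.
Qed.

Definition tensvec m n (u : 'cV[algC]_m) (v : 'cV[algC]_n) : 'cV[algC]_(m * n) :=
  \col_k (u (tens_index k).1 0 * v (tens_index k).2 0).

Lemma tensmxZ m n (a b : algC) (A : 'M[algC]_m) (B : 'M[algC]_n) :
  tensmx (a *: A) (b *: B) = (a * b) *: tensmx A B.
Proof. by apply/matrixP => k l; rewrite !mxE mulrACA. Qed.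

Lemma tensmx_gram m n (u : 'cV[algC]_m) (v : 'cV[algC]_n) :
  tensmx (u *m adjmx u) (v *m adjmx v) = tensvec u v *m adjmx (tensvec u v).
Proof. by apply/matrixP => k l; rewrite !mxE !big_ord1 !mxE rmorphM mulrACA. Qed.

Lemma mxtrace_gram n (w z : 'cV[algC]_n) :
  \tr ((w *m adjmx w) *m (z *m adjmx z)) = `|(adjmx w *m z) 0 0| ^+ 2.
Proof.
rewrite -mulmxA mxtrace_mulC !mulmxA.
have -> : adjmx w *m z *m adjmx z *m w = (adjmx w *m z) *m adjmx (adjmx w *m z).
  by rewrite adjmxM adjmxK !mulmxA.
by rewrite /mxtrace big_ord1 mxE big_ord1 !mxE normCK.
Qed.

(* The (unnormalised) maximally entangled vector sum_i e_i (x) e_i. *)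
Definition maxent n : 'cV[algC]_(n * n) :=
  \col_k ((tens_index k).1 == (tens_index k).2)%:R.

Lemma maxent_overlap n (u v : 'cV[algC]_n) :
  (adjmx (maxent n) *m tensvec u v) 0 0 = \sum_i u i 0 * v i 0.
Proof.
rewrite mxE -(sum_tens_diag (fun i j => u i 0 * v j 0)).
by apply: eq_bigr => k _; rewrite !mxE conjC_nat.
Qed.

Lemma mxtrace_maxent n : \tr (maxent n *m adjmx (maxent n)) = n%:R.
Proof.
rewrite mxtrace_mulC /mxtrace big_ord1 mxE -[n in RHS]card_ord -sumr_const.
rewrite -(sum_tens_diag (fun _ _ => 1)).
by apply: eq_bigr => k _; rewrite !mxE conjC_nat -natrM mulnb andbb mulr1.
Qed.

Definition maxent_state n : 'M[algC]_(n * n) :=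
  n%:R^-1 *: (maxent n *m adjmx (maxent n)).

Lemma density_maxent_state n : (0 < n)%N -> density (maxent_state n).
Proof.
move=> n_gt0; split.
  by apply: psd_scale; [rewrite invr_ge0 ler0n | apply: psd_gram].
by rewrite mxtraceZ mxtrace_maxent mulVf // pnatr_eq0 -lt0n.
Qed.

Lemma maxent_prob n (a b : algC) (u v : 'cV[algC]_n) :
  \tr (maxent_state n *m tensmx (a *: (u *m adjmx u)) (b *: (v *m adjmx v)))
  = n%:R^-1 * (a * b) * `|\sum_i u i 0 * v i 0| ^+ 2.
Proof.
rewrite tensmxZ tensmx_gram -scalemxAl -scalemxAr !mxtraceZ.
by rewrite mxtrace_gram maxent_overlap mulrA.
Qed.

Definition comp2 (v : int * int) (i : 'I_2) : int := [:: v.1; v.2]`_i.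

Definition dir2 (v : int * int) : 'cV[algC]_2 := \col_i (comp2 v i)%:~R.

(* The effect (1/N) v v^H; a projector when N = |v|^2. *)
Definition effect (N : nat) (v : int * int) : 'M[algC]_2 :=
  N%:R^-1 *: (dir2 v *m adjmx (dir2 v)).

Lemma psd_effect N v : psdmx (effect N v).
Proof. by apply: psd_scale; [rewrite invr_ge0 ler0n | apply: psd_gram]. Qed.

Lemma gram_dir2 v i j : (dir2 v *m adjmx (dir2 v)) i j = (comp2 v i * comp2 v j)%:~R.
Proof. by rewrite !mxE big_ord1 !mxE rmorph_int intrM. Qed.

Lemma povm2_effect (N : nat) (f : bool -> int * int) : (0 < N)%N ->
  (forall i j, comp2 (f false) i * comp2 (f false) j +
               comp2 (f true) i * comp2 (f true) j = (N * (i == j))%:Z) ->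
  povm2 (fun a => effect N (f a)).
Proof.
move=> N_gt0 hsum; split; [exact: psd_effect | split; first exact: psd_effect].
apply/matrixP => i j; rewrite /effect -scalerDr mxE mxE !gram_dir2 -intrD hsum.
by rewrite !mxE -pmulrn natrM mulrA mulVf ?mul1r // pnatr_eq0 -lt0n.
Qed.

Lemma dot_dir2 u v : \sum_i dir2 u i 0 * dir2 v i 0 = (u.1 * v.1 + u.2 * v.2)%:~R.
Proof. by rewrite big_ord_recr big_ord1 /= !mxE intrD !intrM. Qed.

Lemma effect_prob (N M : nat) (u v : int * int) :
  \tr (maxent_state 2 *m tensmx (effect N u) (effect M v)) =
  ratr ((u.1 * v.1 + u.2 * v.2)%:~R ^+ 2 / (2 * N%:R * M%:R)).
Proof.
rewrite maxent_prob dot_dir2 normCK rmorph_int -expr2.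
rewrite fmorph_div rmorphXn rmorph_int !rmorphM !rmorph_nat.
by rewrite mulrC !invfM -mulrA.
Qed.

Lemma Ped_ratr (e d : rat) a b x y :
  Ped (ratr e) (ratr d) a b x y =
  ratr (let t := if x && y then e else d in if a == b then (1 - t) / 2 else t / 2).
Proof.
rewrite /Ped /=; case: (a == b); case: (x && y);
  by rewrite fmorph_div ?rmorphB ?rmorph1 rmorph_nat.
Qed.

Lemma corr_Ped_ratr (e d : rat) x y :
  corr (Ped (ratr e) (ratr d)) x y =
  if x && y then ratr (1 - 2 * e) else ratr (1 - 2 * d).
Proof. by rewrite corr_Ped; case: (x && y); rewrite rmorphB rmorph1 rmorphM rmorph_nat. Qed.

Lemma Ped_corr_bounds (e d : rat) : 0 <= 1 - 2 * e -> d <= e ->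
  0 <= ratr (1 - 2 * e) :> algC /\ ratr (1 - 2 * e) <= ratr (1 - 2 * d) :> algC.
Proof. by move=> corr11_ge0 d_le_e; rewrite ler0q ler_rat; split => //; lra. Qed.

Lemma NL_Ped_ratr (e d : rat) : 0 <= 1 - 2 * e -> d <= e ->
  NL (Ped (ratr e) (ratr d)) = ratr ((1 - 2 * d) *+ 3 - (1 - 2 * e)).
Proof.
move=> corr11_ge0 d_le_e; have [lo hi] := Ped_corr_bounds corr11_ge0 d_le_e.
by rewrite (NL_of_corr (corr_Ped_ratr e d) lo hi) [in RHS]rmorphB [in RHS]rmorphMn.
Qed.

Lemma NL_ndp_Ped_ratr n (e d : rat) : 0 <= 1 - 2 * e -> d <= e ->
  NL (ndp n (Ped (ratr e) (ratr d))) = ratr ((1 - 2 * d) ^+ n *+ 3 - (1 - 2 * e) ^+ n).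
Proof.
move=> corr11_ge0 d_le_e; have [lo hi] := Ped_corr_bounds corr11_ge0 d_le_e.
rewrite (NL_ndp n (corr_Ped_ratr e d) lo hi) [in RHS]rmorphB [in RHS]rmorphMn.
by rewrite [in RHS]rmorphXn [in RHS]rmorphXn.
Qed.

Lemma ratr_nat_lt (k : nat) (x : rat) : k%:R < x -> k%:R < ratr x :> algC.
Proof. by rewrite -(ltr_rat algC) rmorph_nat. Qed.

Lemma real_ratr (x : rat) : ratr x \is @Num.real algC.
Proof. exact: Creal_Crat (Crat_rat x). Qed.

Definition deltaQ : rat := 1 / 26.
Definition epsQ : rat := 1369 / 4394.

Definition alice (x a : bool) : int * int :=
  match x, a with
  | false, false => (13, 0) | false, true => (0, 13)
  | true, false => (12, 5) | true, true => (5, -12)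
  end.

Definition bob (y b : bool) : int * int :=
  match y, b with
  | false, false => (5, 1) | false, true => (1, -5)
  | true, false => (5, -1) | true, true => (1, 5)
  end.

Lemma ord2_cases (i : 'I_2) : i = ord0 \/ i = ord_max.
Proof. by case: i => -[|[|//]] ?; [left|right]; apply: val_inj. Qed.

(* The realisation: maximally entangled state, Alice's bases of squared norm
   169, Bob's of squared norm 26; each probability (u . v)^2 / 8788 equals
   the corresponding entry of P_{eps,delta}. *)
Lemma quantum_Ped : quantum_system (Ped (ratr epsQ) (ratr deltaQ)).
Proof.
exists 2%N, 2%N, (maxent_state 2), (fun x a => effect 169 (alice x a)),
  (fun y b => effect 26 (bob y b)).
split; first exact: density_maxent_state.
split.
  move=> x; apply: povm2_effect => // i j.
  by case: (ord2_cases i) => ->; case: (ord2_cases j) => ->; case: x;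
    apply/eqP; vm_compute.
split.
  move=> y; apply: povm2_effect => // i j.
  by case: (ord2_cases i) => ->; case: (ord2_cases j) => ->; case: y;
    apply/eqP; vm_compute.
move=> a b x y; rewrite effect_prob Ped_ratr; congr ratr.
by case: a; case: b; case: x; case: y; rewrite /= /epsQ /deltaQ; field.
Qed.

Lemma example_parameters :
  [/\ 0 < deltaQ, deltaQ < epsQ, epsQ < 1 / 2%:R & 0 <= 1 - 2 * epsQ].
Proof. by rewrite /deltaQ /epsQ; split; lra. Qed.

Lemma example_chsh :
  2%:R < (1 - 2 * deltaQ) *+ 3 - (1 - 2 * epsQ) /\
  (1 - 2 * deltaQ) *+ 3 - (1 - 2 * epsQ) <
  (1 - 2 * deltaQ) ^+ 2 *+ 3 - (1 - 2 * epsQ) ^+ 2.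
Proof. by rewrite /deltaQ /epsQ; split; lra. Qed.

Theorem theorem2 :
  exists (delta eps : algC) (n : nat),
    [/\ delta \is Num.real, eps \is Num.real,
        0 < delta, delta < eps & eps < 1 / 2] /\ (1 < n)%N /\
    quantum_system (Ped eps delta) /\
    NL (ndp n (Ped eps delta)) > NL (Ped eps delta) /\
    NL (Ped eps delta) > 2.
Proof.
have [delta_gt0 delta_lt_eps eps_lt_half corr11_ge0] := example_parameters.
have [NL_gt2 NL_incr] := example_chsh.
have delta_le_eps := ltW delta_lt_eps.
exists (ratr deltaQ), (ratr epsQ), 2%N.
rewrite (NL_ndp_Ped_ratr 2 corr11_ge0 delta_le_eps) (NL_Ped_ratr corr11_ge0 delta_le_eps).
have half : 1 / 2 = ratr (1 / 2%:R) :> algC by rewrite fmorph_div rmorph1 rmorph_nat.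
split.
  split; [exact: real_ratr | exact: real_ratr | | |].
  - by rewrite ltr0q; exact: delta_gt0.
  - by rewrite ltr_rat; exact: delta_lt_eps.
  - by rewrite half ltr_rat; exact: eps_lt_half.
split; first exact: isT.
split; first exact: quantum_Ped.
split; first by rewrite ltr_rat; exact: NL_incr.
exact: ratr_nat_lt NL_gt2.
Qed.
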